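(* Let $c\in\mathbb{N}$ and let $\beta$ be a parameter. Consider the recurrence $$x_{n+4}x_n=x_{n+3}x_{n+1}+\beta\,x_{n+2}^c,$$ corresponding to iteration of the rational map $\varphi:(x_0,x_1,x_2,x_3)\mapsto\big(x_1,x_2,x_3,(x_1x_3+\beta x_2^c)/x_0\big)$ (and its inverse for negative $n$). Then: (i) (Laurent property) $x_n\in\mathbb{Z}[x_0^{\pm1},x_1^{\pm1},x_2^{\pm1},x_3^{\pm1},\beta]$ for all $n\in\mathbb{Z}$; (ii) the recurrence satisfies the singularity confinement test: if for some $n$ one has $x_{n+4}=\epsilon\to 0$ (so that $x_{n+8}$ is potentially singular), then $x_{n+8}=O(1)$ as $\epsilon\to0$; (iii) $\varphi$ is a Poisson map with respect to the log-canonical Poisson bracket $\{\cdot,\cdot\}_c$ defined by $\{x_0,x_1\}_c=x_0x_1$, $\{x_0,x_2\}_c=c\,x_0x_2$, $\{x_0,x_3\}_c=(c+1)x_0x_3$, $\{x_1,x_2\}_c=x_1x_2$, $\{x_1,x_3\}_c=c\,x_1x_3$, $\{x_2,x_3\}_c=x_2x_3$, and this bracket is nondegenerate for $c\neq 2$.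
   Context: Here $\mathbb{N}$ includes $0$ (the paper treats the cases $c=0,1,2,\ldots$). The bracket is extended to rational functions of $x_0,x_1,x_2,x_3$ by bilinearity and the Leibniz rule. A map is Poisson if it preserves the bracket. *)

From HB Require Import structures.
From mathcomp Require Import all_boot all_order all_algebra.
From mathcomp Require Import generic_quotient.
From mathcomp.multinomials Require Import mpoly.

Set Implicit Arguments.
Unset Strict Implicit.
Unset Printing Implicit Defensive.

Import Order.TTheory GRing.Theory Num.Theory.
Local Open Scope ring_scope.

(* Polynomial ring Z[x0,x1,x2,x3,beta] : variables 0..3 are x0..x3, variable 4 is beta. *)
Definition Pol := {mpoly int[5]}.
Definition Fld := {fraction Pol}.
Definition toF (p : Pol) : Fld := @FracField.tofrac Pol p.
Local Notation "x %:F" := (toF x).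

Definition var (k : nat) : Fld := (('X_(inord k) : Pol))%:F.
Definition beta : Fld := var 4.

Definition state := (Fld * Fld * Fld * Fld)%type.

Definition phi (c : nat) (s : state) : state :=
  let: (a, b, d, e) := s in (b, d, e, (b * e + beta * d ^+ c) / a).

Definition phi_inv (c : nat) (s : state) : state :=
  let: (a, b, d, e) := s in ((a * d + beta * b ^+ c) / e, a, b, d).

Definition init : state := (var 0, var 1, var 2, var 3).

Definition fst4 (s : state) : Fld := s.1.1.1.

Definition xs (c : nat) (n : int) : Fld :=
  match n with
  | Posz k => fst4 (iter k (phi c) init)
  | Negz k => fst4 (iter k.+1 (phi_inv c) init)
  end.

(* Coefficients of the log-canonical bracket : {x_i, x_j}_c = omega c i j * x_i * x_j *)
Definition omega_up (c i j : nat) : int :=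
  match i, j with
  | 0, 1 => 1
  | 0, 2 => c%:Z
  | 0, 3 => (c + 1)%:Z
  | 1, 2 => 1
  | 1, 3 => c%:Z
  | 2, 3 => 1
  | _, _ => 0
  end.
Definition omega (c i j : nat) : int := omega_up c i j - omega_up c j i.

Definition dF (k : nat) (f : Fld) : Fld :=
  let r := repr f in
  let n := \n_r in let d := \d_r in
  ((mderiv (inord k) n) * d - n * (mderiv (inord k) d))%:F / (d ^+ 2)%:F.

(* the log-canonical bracket {.,.}_c extended to rational functions by bilinearity
   and the Leibniz rule:  {f,g} = sum_{i,j<4} df/dx_i dg/dx_j {x_i,x_j}_c
   (beta is a parameter, i.e. a Casimir) *)
Definition bracket (c : nat) (f g : Fld) : Fld :=
  \sum_(i < 4) \sum_(j < 4)
     (omega c i j)%:~R * var i * var j * dF i f * dF j g.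

Definition phiF (c : nat) (i : nat) : Fld :=
  match i with
  | 0 => var 1
  | 1 => var 2
  | 2 => var 3
  | _ => (var 1 * var 3 + beta * var 2 ^+ c) / var 0
  end.

(* phi is Poisson: phi^* {x_i,x_j}_c = {phi^* x_i, phi^* x_j}_c, i.e.
   {phi_i, phi_j}_c = omega_ij phi_i phi_j for all coordinate pairs
   (by the Leibniz rule this is equivalent to preserving the bracket). *)
Definition poisson_map (c : nat) : Prop :=
  forall i j : 'I_4,
    bracket c (phiF c i) (phiF c j) = (omega c i j)%:~R * phiF c i * phiF c j.

Definition nondegenerate_bracket (c : nat) : Prop :=
  \det (\matrix_(i < 4, j < 4) bracket c (var i) (var j)) != 0.

From HB Require Import structures.
From mathcomp Require Import all_boot all_order all_algebra.
From mathcomp.multinomials Require Import mpoly.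
From mathcomp Require Import generic_quotient ring zify.
Import Order.TTheory GRing.Theory Num.Theory.

Set Implicit Arguments.
Unset Strict Implicit.
Local Open Scope ring_scope.

(* (i) The coprimality method for Somos-type recurrences: in the Laurent ring
   Z[x0^±1, ..., x3^±1, beta], each new term x_{n+4} generates the unit ideal together
   with beta, x_{n+3}, x_{n+2}^c and x_{n+1}, and an identity between eight consecutive
   terms shows that x_n, being coprime to x_{n-3} x_{n-2}^c x_{n-1}, divides the
   numerator x_{n+3} x_{n+1} + beta x_{n+2}^c of x_{n+4}.
   (ii) Along an orbit with x_{n+4} = eps, the terms x_{n+3}, x_{n+5}, x_{n+6} and the
   product eps x_{n+3} x_{n+8} are polynomials in eps; the last one vanishes at eps = 0,
   while x_{n+3} tends to -beta x_{n+2}^c / x_{n+1} <> 0, so x_{n+8} stays bounded.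
   (iii) Each x_j d(phi_3)/dx_j is an integer combination of the two monomials of phi_3,
   which reduces the Poisson property to ring identities; the structure matrix is
   diag(x) Omega diag(x), where the skew matrix Omega has Pfaffian (1 + c)(2 - c). *)

(** * Laurent property *)

Definition subring_prop (R : pzRingType) (S : R -> Prop) :=
  [/\ S 1, forall x y, S x -> S y -> S (x - y) & forall x y, S x -> S y -> S (x * y)].

Section Comaximal.
Variables (R : comPzRingType) (S : R -> Prop).
Hypothesis subS : subring_prop S.

Lemma subS1 : S 1. Proof. by case: subS. Qed.
Lemma subSB x y : S x -> S y -> S (x - y). Proof. by case: subS => _ SB _; apply: SB. Qed.
Lemma subSM x y : S x -> S y -> S (x * y). Proof. by case: subS => _ _ SM; apply: SM. Qed.
Lemma subS0 : S 0. Proof. by rewrite -(subrr 1); apply: subSB; apply: subS1. Qed.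
Lemma subSN x : S x -> S (- x). Proof. by rewrite -sub0r; apply: subSB; apply: subS0. Qed.
Lemma subSD x y : S x -> S y -> S (x + y).
Proof. by move=> Sx Sy; rewrite -[y]opprK; apply: subSB => //; apply: subSN. Qed.
Lemma subSX x k : S x -> S (x ^+ k).
Proof. by move=> Sx; elim: k => [|k IH]; rewrite ?expr0 ?exprS; [apply: subS1|apply: subSM]. Qed.

Definition comax (a b : R) := exists u v, [/\ S u, S v & u * a + v * b = 1].
Definition dvdS (e x : R) := exists2 w, S w & x = e * w.

Lemma comaxC a b : comax a b -> comax b a.
Proof. by move=> [u [v [Su Sv E]]]; exists v, u; rewrite addrC. Qed.

Lemma comax_unit a b w : S w -> w * a = 1 -> comax a b.
Proof. by move=> Sw E; exists w, 0; rewrite mul0r addr0; split=> //; apply: subS0. Qed.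

Lemma comaxMr a b1 b2 : S b1 -> comax a b1 -> comax a b2 -> comax a (b1 * b2).
Proof.
move=> Sb1 [u1 [v1 [Su1 Sv1 E1]]] [u2 [v2 [Su2 Sv2 E2]]].
exists (u1 + v1 * b1 * u2), (v1 * v2); split.
- by apply: subSD => //; apply: subSM => //; apply: subSM.
- exact: subSM.
- transitivity (u1 * a + v1 * b1 * (u2 * a + v2 * b2)); first by ring.
  by rewrite E2 mulr1.
Qed.

Lemma comaxXr a b k : S b -> comax a b -> comax a (b ^+ k).
Proof.
move=> Sb ab; elim: k => [|k IH]; last by rewrite exprS; apply: comaxMr.
by rewrite expr0; exists 0, 1; rewrite mul0r add0r mulr1; split; [apply: subS0|apply: subS1|].
Qed.

Lemma comax_mod e b p A B : S A -> S B -> e * A + b * B = p -> comax p b -> comax e b.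
Proof.
move=> SA SB E [u [v [Su Sv E1]]]; exists (u * A), (u * B + v); split.
- exact: subSM.
- by apply: subSD => //; apply: subSM.
- by rewrite -E1 -E; ring.
Qed.

Lemma comax_dvd e m x y : S x -> S y -> comax e m -> m * x = e * y -> dvdS e x.
Proof.
move=> Sx Sy [u [v [Su Sv E1]]] E; exists (u * x + v * y).
  by apply: subSD; apply: subSM.
transitivity ((u * e + v * m) * x); first by rewrite E1 mul1r.
by rewrite mulrDl -(mulrA v) E; ring.
Qed.

Lemma dvdS_subX e x y k : S x -> S y -> dvdS e (y - x) -> dvdS e (y ^+ k - x ^+ k).
Proof.
move=> Sx Sy [w Sw Ew]; elim: k => [|k [v Sv Ev]].
  by exists 0; rewrite ?subrr ?mulr0 //; apply: subS0.
exists (y ^+ k * w + v * x); first by apply: subSD; apply: subSM => //; apply: subSX.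
transitivity (y ^+ k * (y - x) + (y ^+ k - x ^+ k) * x); first by rewrite !exprS; ring.
by rewrite Ew Ev; ring.
Qed.

Variables (c : nat) (bet : R).
Hypothesis Sbet : S bet.

(* [a, b, d, f, e, g, h, k] are eight consecutive terms; the four relations make
   [b d^c f (k g + bet h^c)] a multiple of [e]. *)
Lemma somos_dvd a b d f e g h k :
  [/\ S a, S b, S d, S f & [/\ S e, S g, S h & S k]] ->
  e * a = f * b + bet * d ^+ c -> g * b = e * d + bet * f ^+ c ->
  h * d = g * f + bet * e ^+ c -> k * f = h * e + bet * g ^+ c ->
  comax e (b * d ^+ c * f) -> dvdS e (k * g + bet * h ^+ c).
Proof.
move=> [Sa Sb Sd Sf [Se Sg Sh Sk]] Ea Eb Ed Ef ebdf.
have [Z SZ EZ] : dvdS e ((h * d) ^+ c - (g * f) ^+ c).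
  have [->|c_gt0] := posnP c.
    by exists 0; rewrite ?expr0 ?subrr ?mulr0 //; apply: subS0.
  apply: dvdS_subX; [apply: subSM|apply: subSM|] => //.
  exists (bet * e ^+ c.-1); first by apply: subSM => //; apply: subSX.
  by rewrite Ed addrAC subrr add0r -{1}(prednK c_gt0) exprS; ring.
have {}EZ : h ^+ c * d ^+ c = g ^+ c * f ^+ c + e * Z.
  by rewrite -!exprMn -EZ subrKC.
pose w := b * h * g * d ^+ c + bet * b * f * Z + bet * g ^+ c * d * d ^+ c
          + bet * g ^+ c * f ^+ c * a.
apply: (comax_dvd (y := w) _ _ ebdf).
- by apply: subSD; apply: subSM => //; apply: subSX.
- by rewrite /w; repeat (apply: subSD || apply: subSM || apply: subSX).
rewrite /w; move: Ea Eb Ef EZ; move: (d ^+ c) (f ^+ c) (g ^+ c) (h ^+ c) => dc fc gc hc Ea Eb Ef EZ.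
apply/eqP; rewrite -subr_eq0; apply/eqP.
transitivity (b * dc * g * (k * f - (h * e + bet * gc))
  + bet * b * f * (hc * dc - (gc * fc + e * Z))
  + bet * gc * dc * (g * b - (e * d + bet * fc))
  + bet * gc * fc * (f * b + bet * dc - e * a)); first by ring.
by rewrite Ea Eb Ef EZ !subrr !mulr0 !addr0.
Qed.

End Comaximal.

Lemma ltnS_cases m n : (m < n.+1)%N -> (m < n)%N \/ m = n.
Proof. by rewrite ltnS leq_eqVlt => /predU1P [->|]; [right|left]. Qed.

Section SomosLaurent.
Variables (F : fieldType) (S : F -> Prop).
Hypothesis subS : subring_prop S.
Variables (c : nat) (bet : F) (z : nat -> F).
Hypothesis Sbet : S bet.
Hypothesis z_seed : forall i, (i < 4)%N -> S (z i) /\ exists2 w, S w & w * z i = 1.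
Hypothesis z_rec : forall m, z m.+4 = (z m.+3 * z m.+1 + bet * z m.+2 ^+ c) / z m.

Local Notation comax := (comax S).
Local Notation num m := (z m.+3 * z m.+1 + bet * z m.+2 ^+ c).

Definition somos_coprime N :=
  [/\ forall m, (m < N)%N -> S (z m) /\ comax (z m) bet,
      forall m, (m.+1 < N)%N -> comax (z m.+1) (z m),
      forall m, (m.+2 < N)%N -> comax (z m.+2) (z m ^+ c),
      forall m, (m.+3 < N)%N -> comax (z m.+3) (z m) &
      forall m, (m.+4 < N)%N -> z m.+4 * z m = num m].

Lemma seed_comax i b : (i < 4)%N -> comax (z i) b.
Proof. by move=> /z_seed [_ [w Sw E]]; apply: comax_unit E. Qed.

Lemma somos_coprime_seed N : (N < 4)%N -> somos_coprime N -> somos_coprime N.+1.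
Proof.
move=> N_lt4 [G0 G1 G2 G3 G4]; have [SzN _] := z_seed N_lt4.
split=> m /ltnS_cases [old|new]; try by [apply: G0|apply: G1|apply: G2|apply: G3|apply: G4].
  by rewrite new; split; last apply: seed_comax.
1-3: by apply: seed_comax; rewrite new.
by move: N_lt4; rewrite -new.
Qed.

Lemma somos_num_dvd n : somos_coprime n.+4 -> dvdS S (z n) (num n).
Proof.
move=> [G0 G1 G2 G3 G4].
have Sz m : (m < n.+4)%N -> S (z m) by move=> /G0 [].
have [Sb Sd Sf] : [/\ S (z n.+1), S (z n.+2) & S (z n.+3)] by split; apply: Sz; lia.
have Snum : S (num n) by apply: (subSD subS); apply: (subSM subS) => //; apply: (subSX subS).
have [n_lt4|] := ltnP n 4.
  have [_ [w Sw E]] := z_seed n_lt4.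
  by exists (w * num n); [apply: (subSM subS)|rewrite mulrA [z n * w]mulrC E mul1r].
case: n Sz Sb Sd Sf Snum G0 G1 G2 G3 G4 => [|[|[|[|m]]]] // Sz _ _ _ _ G0 G1 G2 G3 G4 _.
apply: (somos_dvd subS Sbet (a := z m) (b := z m.+1) (d := z m.+2) (f := z m.+3)).
- by do ![split]; apply: Sz; lia.
- by apply: G4; lia.
- by apply: G4; lia.
- by apply: G4; lia.
- by apply: G4; lia.
- apply: (comaxMr subS); last by apply: G1; lia.
    by apply: (subSM subS); [|apply: (subSX subS)]; apply: Sz; lia.
  by apply: (comaxMr subS); [apply: Sz|apply: G3|apply: G2]; lia.
Qed.

Lemma somos_coprime_step n : somos_coprime n.+4 -> somos_coprime n.+4.+1.
Proof.
move=> G; have [w Sw Enum] := somos_num_dvd G; case: G => G0 G1 G2 G3 G4.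
have Sz m : (m < n.+4)%N -> S (z m) by move=> /G0 [].
have zb m : (m < n.+4)%N -> comax (z m) bet by move=> /G0 [].
have [Sa Sb Sd Sf] : [/\ S (z n), S (z n.+1), S (z n.+2) & S (z n.+3)] by split; apply: Sz; lia.
have [Se Ee] : S (z n.+4) /\ z n.+4 * z n = num n.
  have [zn0|zn_neq0] := eqVneq (z n) 0.
    by rewrite z_rec Enum zn0 !mul0r; split=> //; apply: subS0.
  by rewrite z_rec Enum [z n * w]mulrC mulfK //; split => //; apply: mulrC.
(* Reduce [e a = f b + bet d^c] modulo each of [bet], [f], [d^c] and [b]. *)
have comax_e b p B : S B -> z n.+4 * z n + b * B = p -> comax p b -> comax (z n.+4) b.
  by move=> SB E; exact: (comax_mod subS Sa SB E).
have e_bet : comax (z n.+4) bet.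
  apply: (comax_e _ (z n.+3 * z n.+1) (- z n.+2 ^+ c)).
  - by apply: (subSN subS); apply: (subSX subS).
  - by rewrite Ee; ring.
  - by apply: comaxC; apply: (comaxMr subS) => //; apply: comaxC; apply: zb; lia.
have e_f : comax (z n.+4) (z n.+3).
  apply: (comax_e _ (bet * z n.+2 ^+ c) (- z n.+1)); first exact: (subSN subS).
  - by rewrite Ee; ring.
  - apply: comaxC; apply: (comaxMr subS) => //; first by apply: zb; lia.
    by apply: (comaxXr subS) => //; apply: G1; lia.
have e_dc : comax (z n.+4) (z n.+2 ^+ c).
  apply: (comax_e _ (z n.+3 * z n.+1) (- bet)); first exact: (subSN subS).
  - by rewrite Ee; ring.
  - apply: (comaxXr subS) => //; apply: comaxC.
    by apply: (comaxMr subS) => //; [apply: comaxC|]; apply: G1; lia.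
have e_b : comax (z n.+4) (z n.+1).
  apply: (comax_e _ (bet * z n.+2 ^+ c) (- z n.+3)); first exact: (subSN subS).
  - by rewrite Ee; ring.
  - apply: comaxC; apply: (comaxMr subS) => //; first by apply: zb; lia.
    by apply: (comaxXr subS) => //; apply: comaxC; apply: G1; lia.
split=> m /ltnS_cases [old|new]; try by [apply: G0|apply: G1|apply: G2|apply: G3|apply: G4].
  by rewrite new.
all: by case: new => ->.
Qed.

Lemma somos_laurent m : S (z m).
Proof.
suff inv N : somos_coprime N by have [/(_ m (ltnSn m)) []] := inv m.+1.
elim: N => [|N IH]; first by split.
have [N_lt4|] := ltnP N 4; first exact: somos_coprime_seed.
by case: N IH => [|[|[|[|n]]]] // IH _; apply: somos_coprime_step.
Qed.

End SomosLaurent.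

Lemma toF1 : toF 1 = 1. Proof. exact: rmorph1. Qed.
Lemma toFD p q : toF (p + q) = toF p + toF q. Proof. exact: rmorphD. Qed.
Lemma toFN p : toF (- p) = - toF p. Proof. exact: rmorphN. Qed.
Lemma toFB p q : toF (p - q) = toF p - toF q. Proof. exact: rmorphB. Qed.
Lemma toFM p q : toF (p * q) = toF p * toF q. Proof. exact: rmorphM. Qed.
Lemma toFX p k : toF (p ^+ k) = toF p ^+ k. Proof. exact: rmorphXn. Qed.

Lemma toF_var i : toF 'X_(inord i) = var i. Proof. by []. Qed.

Lemma var_neq0 i : var i != 0.
Proof. by rewrite /var /toF tofrac_eq0 -msize_poly_eq0 msizeX. Qed.

Lemma toF_inj : injective toF.
Proof. by move=> p q /eqP; rewrite /toF tofrac_eq => /eqP. Qed.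

Lemma toF_nat n : toF n%:R = n%:R. Proof. exact: rmorph_nat. Qed.

Lemma natr_Fld_inj m n : (m%:R : Fld) = n%:R -> m = n.
Proof.
rewrite -!toF_nat => /toF_inj; rewrite -!mpolyC_nat => /eqP.
by rewrite mpolyC_eq eqr_nat => /eqP.
Qed.

Definition monomial_x : Fld := \prod_(i < 4) var i.

Definition laurent (f : Fld) := exists (p : Pol) (k : nat), f * monomial_x ^+ k = toF p.

Lemma laurent_toF p : laurent (toF p).
Proof. by exists p, 0%N; rewrite mulr1. Qed.

Lemma subring_laurent : subring_prop laurent.
Proof.
pose M : Pol := \prod_(i < 4) 'X_(inord i).
have mE : monomial_x = toF M by rewrite /toF rmorph_prod.
split; first by rewrite -toF1; apply: laurent_toF.
- move=> f g [p [k Ep]] [q [l Eq]]; exists (p * M ^+ l - q * M ^+ k), (k + l)%N.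
  by rewrite toFB !toFM !toFX -mE -Ep -Eq exprD; ring.
- move=> f g [p [k Ep]] [q [l Eq]]; exists (p * q), (k + l)%N.
  by rewrite toFM -Ep -Eq exprD; ring.
Qed.

Lemma laurent_var_unit i : (i < 4)%N -> laurent (var i) /\ exists2 w, laurent w & w * var i = 1.
Proof.
move=> lt_i4; split; first exact: laurent_toF.
exists (var i)^-1; last by rewrite mulVf ?var_neq0.
exists (\prod_(j < 4 | j != Ordinal lt_i4) 'X_(inord j)), 1%N.
by rewrite expr1 /monomial_x (bigD1 (Ordinal lt_i4)) //= mulKf ?var_neq0 // /toF rmorph_prod.
Qed.

Lemma orbit_phi_rec c s m : let z k := fst4 (iter k (phi c) s) in
  z m.+4 = (z m.+3 * z m.+1 + beta * z m.+2 ^+ c) / z m.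
Proof.
move=> z; rewrite /z -[m.+4]/(4 + m)%N -[m.+3]/(3 + m)%N -[m.+2]/(2 + m)%N -[m.+1]/(1 + m)%N !iterD.
by case: (iter m (phi c) s) => [[[a b] d] e]; rewrite /fst4 /= [e * b]mulrC.
Qed.

Lemma orbit_phi_inv_rec c s m : let z k := (iter k (phi_inv c) s).2 in
  z m.+4 = (z m.+3 * z m.+1 + beta * z m.+2 ^+ c) / z m.
Proof.
move=> z; rewrite /z -[m.+4]/(4 + m)%N -[m.+3]/(3 + m)%N -[m.+2]/(2 + m)%N -[m.+1]/(1 + m)%N !iterD.
by case: (iter m (phi_inv c) s) => [[[a b] d] e].
Qed.

Lemma laurent_xs c n : laurent (xs c n).
Proof.
have Sbeta : laurent beta by apply: laurent_toF.
case: n => k.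
  apply: (somos_laurent subring_laurent Sbeta _ (orbit_phi_rec c init)).
  by case=> [|[|[|[|]]]] // _; apply: laurent_var_unit.
have -> : xs c (Negz k) = (iter k.+4 (phi_inv c) init).2.
  by rewrite /xs -[k.+4]/(3 + k.+1)%N iterD; case: (iter k.+1 (phi_inv c) init) => [[[a b] d] e].
apply: (somos_laurent subring_laurent Sbeta _ (orbit_phi_inv_rec c init)).
by case=> [|[|[|[|]]]] // _; apply: laurent_var_unit.
Qed.

(** * Singularity confinement *)

Section Confinement.
Variables (K : fieldType) (c : nat) (bet a b d : K).

(* With [x_n, x_{n+1}, x_{n+2}] = [a, b, d] and [x_{n+4}] = ['X], these are
   [x_{n+3}], [x_{n+5}], [x_{n+6}] and [x_{n+4} x_{n+3} x_{n+8}]. *)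
Definition conf3 : {poly K} := b^-1 *: (a *: 'X - (bet * d ^+ c)%:P).
Definition conf5 : {poly K} := b^-1 *: (d *: 'X + bet *: conf3 ^+ c).
Definition conf6 : {poly K} := d^-1 *: (conf5 * conf3 + bet *: 'X ^+ c).
Definition conf_poly : {poly K} :=
  (conf6 * 'X + bet *: conf5 ^+ c) * conf5 + bet *: (conf6 ^+ c * conf3).

Lemma conf3E x : conf3.[x] = b^-1 * (a * x - bet * d ^+ c).
Proof. by rewrite !(hornerZ, hornerD, hornerN, hornerX, hornerC). Qed.

(* Generalizing [conf3] keeps the horner rules from unfolding it. *)
Lemma conf5E x : conf5.[x] = b^-1 * (d * x + bet * conf3.[x] ^+ c).
Proof. by rewrite /conf5; move: conf3 => p; rewrite !(hornerZ, hornerD, hornerX, horner_exp). Qed.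

Lemma conf6E x : conf6.[x] = d^-1 * (conf5.[x] * conf3.[x] + bet * x ^+ c).
Proof.
by rewrite /conf6; move: conf3 conf5 => p q; rewrite !(hornerZ, hornerD, hornerM, hornerX, horner_exp).
Qed.

Lemma conf_polyE x : conf_poly.[x] =
  (conf6.[x] * x + bet * conf5.[x] ^+ c) * conf5.[x] + bet * (conf6.[x] ^+ c * conf3.[x]).
Proof.
rewrite /conf_poly; move: conf3 conf5 conf6 => p q r.
by rewrite !(hornerZ, hornerD, hornerM, hornerX, horner_exp).
Qed.

Hypotheses (b_neq0 : b != 0) (d_neq0 : d != 0).

Lemma conf_poly_root0 : root conf_poly 0.
Proof.
have y3E : conf3.[0] * b = - (bet * d ^+ c) by rewrite conf3E; field.
have y5E : conf5.[0] * b = bet * conf3.[0] ^+ c by rewrite conf5E; field.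
have y6E : conf6.[0] * d = conf5.[0] * conf3.[0] + bet * 0 ^+ c by rewrite conf6E; field.
have y6dE : (conf6.[0] * d) ^+ c = (conf5.[0] * conf3.[0]) ^+ c.
  have [->|c_gt0] := posnP c; first by rewrite !expr0.
  by rewrite y6E expr0n gtn_eqF // mulr0 addr0.
apply/eqP; rewrite conf_polyE mulr0 add0r.
apply: (mulIf (mulf_neq0 (expf_neq0 c d_neq0) b_neq0)); rewrite mul0r.
move: (conf3.[0]) (conf5.[0]) (conf6.[0]) y3E y5E y6dE => y3 y5 y6 y3E y5E y6dE.
transitivity (bet * y5 ^+ c * (d ^+ c * (y5 * b)) + bet * (y6 * d) ^+ c * (y3 * b)).
  by rewrite exprMn; ring.
by rewrite y5E y6dE y3E exprMn; ring.
Qed.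

Lemma conf_orbit (y : nat -> K) eps :
  y 0 = a -> y 1 = b -> y 2 = d -> y 4 = eps ->
  (forall k, (k <= 4)%N -> y k.+4 * y k = y k.+3 * y k.+1 + bet * y k.+2 ^+ c) ->
  y 3 = conf3.[eps] /\ y 8 * eps * y 3 = conf_poly.[eps].
Proof.
move=> y0 y1 y2 y4 rec.
have [R0 R1 R2 R3 R4] := And5 (rec 0%N isT) (rec 1%N isT) (rec 2%N isT) (rec 3%N isT) (rec 4%N isT).
have Y3 : y 3 = conf3.[eps].
  by rewrite conf3E -[y 3](mulKf b_neq0) [b * _]mulrC -y1 -y0 -y2 -y4 [y 0 * _]mulrC R0 addrK.
have Y5 : y 5 = conf5.[eps].
  by rewrite conf5E -Y3 -[y 5](mulKf b_neq0) [b * _]mulrC -y1 -y2 -y4 [y 2 * _]mulrC R1.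
have Y6 : y 6 = conf6.[eps].
  by rewrite conf6E -Y3 -Y5 -[y 6](mulKf d_neq0) [d * _]mulrC -y2 -y4 R2.
split=> //; rewrite conf_polyE -Y3 -Y5 -Y6 -y4 R4 mulrDl mulrAC R3; ring.
Qed.

End Confinement.

Lemma horner_bounded (K : numFieldType) (p : {poly K}) :
  exists M, forall x, `|x| <= 1 -> `|p.[x]| <= M.
Proof.
exists (\sum_(i < size p) `|p`_i|) => x x_le1.
rewrite horner_coef; apply: le_trans (ler_norm_sum _ _ _) _.
apply: ler_sum => i _; rewrite normrM normrX.
by apply: ler_piMr => //; apply: exprn_ile1.
Qed.

Lemma min_pos (K : numDomainType) (p q : K) : 0 < p -> 0 < q ->
  [/\ 0 < Num.min p q, Num.min p q <= p & Num.min p q <= q].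
Proof.
move=> p_gt0 q_gt0; have pq : p >=< q := real_comparable (gtr0_real p_gt0) (gtr0_real q_gt0).
by rewrite comparable_lt_min // p_gt0 q_gt0 !comparable_ge_min // !lexx ?orbT.
Qed.

Lemma norm_conf3_ge (K : numFieldType) c (bet a b d eps : K) :
  b != 0 -> `|a * eps| <= `|bet * d ^+ c| / 2 ->
  `|bet * d ^+ c| / 2 / `|b| <= `|(conf3 c bet a b d).[eps]|.
Proof.
move=> b_neq0; rewrite conf3E; move: (bet * d ^+ c) => D small.
rewrite normrM normfV mulrC; apply: ler_wpM2l; first by rewrite invr_ge0.
rewrite distrC; apply: le_trans (lerB_dist _ _).
by rewrite lerBrDr {2}(splitr `|D|) lerD2l.
Qed.

Lemma confined_orbit_bounded (K : numFieldType) c (bet a b d : K) :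
  bet != 0 -> b != 0 -> d != 0 ->
  exists M r, 0 < r /\ forall (y : nat -> K) eps, 0 < `|eps| <= r ->
    y 0 = a -> y 1 = b -> y 2 = d -> y 4 = eps ->
    (forall k, (k <= 4)%N -> y k.+4 * y k = y k.+3 * y k.+1 + bet * y k.+2 ^+ c) ->
    `|y 8| <= M.
Proof.
move=> bet_neq0 b_neq0 d_neq0.
pose D := `|bet * d ^+ c| / 2.
have D_gt0 : 0 < D by rewrite divr_gt0 // normr_gt0 mulf_neq0 // expf_neq0.
have [Q PQ] := factor_theorem _ _ (conf_poly_root0 c bet a b_neq0 d_neq0).
have [M QM] := horner_bounded Q.
pose e := D / (`|a| + 1).
have e_gt0 : 0 < e by rewrite divr_gt0 // ltr_wpDl.
have [r_gt0 r_le1 r_le_e] := min_pos ltr01 e_gt0.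
exists (M / (D / `|b|)), (Num.min 1 e); split=> // y eps /andP [eps_gt0 eps_le] y0 y1 y2 y4 rec.
have [y3E y8E] := conf_orbit b_neq0 d_neq0 y0 y1 y2 y4 rec.
have y3_ge : D / `|b| <= `|y 3|.
  rewrite y3E; apply: norm_conf3_ge => //; rewrite normrM.
  apply: le_trans (_ : _ <= (`|a| + 1) * e) _; last by rewrite mulrC divfK // gt_eqF // ltr_wpDl.
  by apply: ler_pM => //; [rewrite lerDl | apply: le_trans r_le_e].
have y3_neq0 : y 3 != 0.
  by rewrite -normr_gt0; apply: lt_le_trans y3_ge; rewrite divr_gt0 // normr_gt0.
have eps_neq0 : eps != 0 by rewrite -normr_gt0.
have y8Q : y 8 * y 3 = Q.[eps].
  by apply: (mulIf eps_neq0); rewrite mulrAC y8E PQ hornerM hornerXsubC subr0.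
rewrite -[y 8](mulfK y3_neq0) y8Q normrM normfV.
apply: ler_pM; rewrite ?invr_ge0 //; first by apply: QM; apply: le_trans r_le1.
by rewrite lef_pV2 ?posrE ?normr_gt0 // divr_gt0 // normr_gt0.
Qed.

Theorem singularity_confinement (c : nat) (K : numFieldType) (bet : K) (n : int) (a b d : K)
    (delta0 : K) (x : K -> int -> K) :
  bet != 0 -> b != 0 -> d != 0 -> 0 < delta0 ->
  (forall eps : K, 0 < `|eps| < delta0 ->
     [/\ x eps n = a, x eps (n + 1) = b, x eps (n + 2) = d,
         x eps (n + 4) = eps &
         forall k : nat, (k <= 4)%N ->
           x eps (n + k%:Z + 4) * x eps (n + k%:Z)
           = x eps (n + k%:Z + 3) * x eps (n + k%:Z + 1)
             + bet * x eps (n + k%:Z + 2) ^+ c]) ->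
  exists (M delta : K), 0 < delta /\
    forall eps : K, 0 < `|eps| < delta -> `|x eps (n + 8)| <= M.
Proof.
move=> bet_neq0 b_neq0 d_neq0 delta0_gt0 orbit.
have [M [r [r_gt0 bounded]]] := @confined_orbit_bounded K c bet a b d bet_neq0 b_neq0 d_neq0.
have [delta_gt0 delta_le0 delta_le_r] := min_pos delta0_gt0 r_gt0.
exists M, (Num.min delta0 r); split=> // eps /andP [eps_gt0 eps_lt].
have [x0 x1 x2 x4 rec] := orbit eps (introT andP (conj eps_gt0 (lt_le_trans eps_lt delta_le0))).
apply: (bounded (fun k => x eps (n + k%:Z)) eps) => //=; first by rewrite eps_gt0 ltW ?(lt_le_trans eps_lt).
  by rewrite addr0.
move=> k k_le4; rewrite -[k.+4]addn4 -[k.+3]addn3 -[k.+2]addn2 -[k.+1]addn1 !PoszD !addrA.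
exact: rec.
Qed.

(** * The log-canonical bracket *)

Section ReprEq.
Local Open Scope quotient_scope.

Lemma repr_frac (f : Fld) : f = toF (\n_(repr f)) / toF (\d_(repr f)).
Proof.
rewrite -[f in LHS]reprK; set r := repr f.
rewrite /toF; unlock FracField.tofrac.
change (\pi_(FracField.type Pol) r = FracField.mul (\pi_(FracField.type Pol) (Ratio \n_r 1))
  (FracField.inv (\pi_(FracField.type Pol) (Ratio \d_r 1)))).
rewrite -FracField.pi_inv -FracField.pi_mul /FracField.mulf /FracField.invf.
by rewrite !numden_Ratio ?oner_neq0 ?denom_ratioP // mul1r mulr1 FracField.Ratio_numden.
Qed.

End ReprEq.

Lemma quotient_rule (F : fieldType) (a e p v : F) : v != 0 ->
  (a * v - p * e) / v ^+ 2 = (a - e * (p / v)) / v.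
Proof. by move=> v_neq0; field. Qed.

Lemma dF_frac k (p q : Pol) : q != 0 ->
  dF k (toF p / toF q) =
  (toF (mderiv (inord k) p) - toF (mderiv (inord k) q) * (toF p / toF q)) / toF q.
Proof.
move=> q_neq0; rewrite /dF; set f := toF p / toF q.
have Ef := repr_frac f; set r := repr f in Ef *; set n := \n_r in Ef *; set d := \d_r in Ef *.
have d_neq0 : d != 0 by apply: denom_ratioP.
have toF_neq0 (s : Pol) : s != 0 -> toF s != 0 by move=> ?; rewrite /toF tofrac_eq0.
have E : n * q = p * d.
  apply: toF_inj; rewrite !toFM; apply/eqP.
  by rewrite -eqr_div ?toF_neq0 // -Ef.
have E' := congr1 (mderiv (inord k)) E; rewrite !mderivM in E'.
rewrite /f -quotient_rule ?toF_neq0 // -!toFM -toFX -!toFB.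
apply/eqP; rewrite eqr_div ?toF_neq0 ?expf_neq0 // -!toFM; apply/eqP; congr toF.
set n' := mderiv _ n in E' *; set d' := mderiv _ d in E' *.
set p' := mderiv _ p in E' *; set q' := mderiv _ q in E' *.
apply/eqP; rewrite -subr_eq0; apply/eqP.
transitivity (d * q * ((n' * q + n * q') - (p' * d + p * d')) - (d' * q + q' * d) * (n * q - p * d)).
  by ring.
by rewrite E E' !subrr !mulr0 subrr.
Qed.

Lemma mderivXU (i j : 'I_5) : mderiv i ('X_j : Pol) = (j == i)%:R.
Proof.
rewrite mderivX mnm1E; case: eqP => [->|_]; last by rewrite scale0r.
have -> : (U_(i) - U_(i) = 0)%MM by apply/mnmP => l; rewrite mnmBE subnn mnm0E.
by rewrite mpolyX0 scale1r.
Qed.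

Lemma mderivXn (i : 'I_5) (p : Pol) m :
  mderiv i (p ^+ m) = m%:R * p ^+ m.-1 * mderiv i p.
Proof.
elim: m => [|m IH]; first by rewrite expr0 -mpolyC1 mderivC !mul0r.
rewrite exprS mderivM IH; case: m {IH} => [|m]; rewrite /= ?expr0 ?exprS; ring.
Qed.

Lemma dF_var i k : (i < 4)%N -> (k < 4)%N -> dF k (var i) = (i == k)%:R.
Proof.
move=> lt_i4 lt_k4; have -> : var i = toF 'X_(inord i) / toF 1 by rewrite toF1 divr1.
rewrite dF_frac ?oner_neq0 // -mpolyC1 mderivC mpolyC1 toF1 mul0r subr0 divr1.
by rewrite mderivXU -val_eqE /= !inordK ?toF_nat // ltnW.
Qed.

Section Bracket.
Variable c : nat.

Lemma omegaC i j : omega c j i = - omega c i j.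
Proof. by rewrite /omega opprB. Qed.

Lemma bracketC f g : bracket c f g = - bracket c g f.
Proof.
rewrite /bracket exchange_big -sumrN; apply: eq_bigr => i _.
rewrite -sumrN; apply: eq_bigr => j _; rewrite omegaC mulrNz; ring.
Qed.

Lemma bracketxx f : bracket c f f = 0.
Proof.
have /eqP := bracketC f f; rewrite -addr_eq0 -mulr2n -mulr_natr mulf_eq0 => /orP [/eqP //|].
by move=> /eqP two0; have := natr_Fld_inj (n := 0) two0.
Qed.

Lemma bracket_varl i g : (i < 4)%N ->
  bracket c (var i) g = \sum_(j < 4) (omega c i j)%:~R * var i * var j * dF j g.
Proof.
move=> lt_i4; rewrite /bracket (bigD1 (Ordinal lt_i4)) //= [X in _ + X]big1 ?addr0.
  by apply: eq_bigr => j _; rewrite dF_var // eqxx mulr1.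
move=> k k_i; have /negbTE i_k : i != k by rewrite eq_sym.
by apply: big1 => j _; rewrite dF_var // i_k mulr0 mul0r.
Qed.

Lemma bracket_var i j : (i < 4)%N -> (j < 4)%N ->
  bracket c (var i) (var j) = (omega c i j)%:~R * var i * var j.
Proof.
move=> lt_i4 lt_j4; rewrite bracket_varl // (bigD1 (Ordinal lt_j4)) //= [X in _ + X]big1 ?addr0.
  by rewrite dF_var // eqxx mulr1.
move=> k k_j; have /negbTE j_k : j != k by rewrite eq_sym.
by rewrite dF_var // j_k mulr0.
Qed.

End Bracket.

Lemma phiF3_frac c : phiF c 3 =
  toF ('X_(inord 1) * 'X_(inord 3) + 'X_(inord 4) * 'X_(inord 2) ^+ c) / toF 'X_(inord 0).
Proof. by rewrite toFD !toFM toFX. Qed.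

Lemma phiF3_logderiv c :
  [/\ var 0 * dF 0 (phiF c 3) = - phiF c 3,
      var 1 * dF 1 (phiF c 3) = var 1 * var 3 / var 0,
      var 2 * dF 2 (phiF c 3) = c%:R * (beta * var 2 ^+ c / var 0) &
      var 3 * dF 3 (phiF c 3) = var 1 * var 3 / var 0].
Proof.
have X0 : 'X_(inord 0) != 0 :> Pol by rewrite -msize_poly_eq0 msizeX.
rewrite phiF3_frac !dF_frac // -phiF3_frac.
rewrite !(mderivD, mderivM, mderivXn, mderivXU) -!val_eqE /= !inordK //.
rewrite !(toFD, toFN, toFM, toFX, toF_nat, toF_var) -/beta /=.
split; [by rewrite mulrC divfK ?var_neq0 //; ring | ring | | ring].
by case: c => [|k]; rewrite ?exprS ?succnK; ring.
Qed.

Section Poisson.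
Variable c : nat.

Lemma bracket_var_phi3 i : (0 < i < 4)%N ->
  bracket c (var i) (phiF c 3) = (omega c i.-1 3)%:~R * var i * phiF c 3.
Proof.
move=> /andP [i_gt0 lt_i4]; have [l0 l1 l2 l3] := phiF3_logderiv c; set phi3 := phiF c 3 in l0 l1 l2 l3 *.
rewrite bracket_varl // !big_ord_recr big_ord0 /= add0r -!mulrA l0 l1 l2 l3 /phi3.
case: i i_gt0 lt_i4 => [|[|[|[|//]]]] // _ _; rewrite /omega /omega_up /=; ring.
Qed.

Lemma poisson_map_phi : poisson_map c.
Proof.
move=> [[|[|[|[|//]]]] lt_i4] [[|[|[|[|//]]]] lt_j4] /=;
  rewrite ?bracketxx ?bracket_var ?bracket_var_phi3 //; try (rewrite bracketC bracket_var_phi3 //);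
  rewrite /omega /omega_up /=; ring.
Qed.

End Poisson.

Section Skew4.
Variable R : comPzRingType.

Definition skew4 (a b c d e f : R) : 'M[R]_4 :=
  \matrix_(i, j) match nat_of_ord i, nat_of_ord j with
    | 0, 1 => a | 0, 2 => b | 0, 3 => c | 1, 2 => d | 1, 3 => e | 2, 3 => f
    | 1, 0 => - a | 2, 0 => - b | 3, 0 => - c | 2, 1 => - d | 3, 1 => - e | 3, 2 => - f
    | _, _ => 0
    end.

(* The right factor is the skew matrix of complementary minors; [a f - b e + c d]
   is the Pfaffian. *)
Lemma skew4_mul_dual a b c d e f :
  skew4 a b c d e f *m skew4 (- f) e (- d) (- c) b (- a) = (a * f - b * e + c * d)%:M.
Proof.
apply/matrixP => i j; rewrite !mxE big_ord_recr !big_ord_recl big_ord0 /= !mxE.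
by case: i j => [[|[|[|[|//]]]] ?] [[|[|[|[|//]]]] ?]; rewrite /= ?mulr1n ?mulr0n; ring.
Qed.

End Skew4.

Lemma det_skew4_neq0 (R : idomainType) (a b c d e f : R) :
  a * f - b * e + c * d != 0 -> \det (skew4 a b c d e f) != 0.
Proof.
move=> pf_neq0; apply: contraNneq (expf_neq0 4 pf_neq0) => det0.
by rewrite -det_scalar -skew4_mul_dual det_mulmx det0 mul0r.
Qed.

Lemma bracket_nondegenerate c : c <> 2%N -> nondegenerate_bracket c.
Proof.
move=> c_neq2; rewrite /nondegenerate_bracket; pose x : 'rV[Fld]_4 := \row_i var i.
have -> : \matrix_(i < 4, j < 4) bracket c (var i) (var j)
          = diag_mx x *m skew4 1 c%:R (c + 1)%:R 1 c%:R 1 *m diag_mx x.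
  apply/matrixP => i j; rewrite mul_mx_diag mul_diag_mx !mxE bracket_var //.
  by case: i j => [[|[|[|[|//]]]] ?] [[|[|[|[|//]]]] ?]; rewrite /omega /omega_up /=; ring.
have x_neq0 : \det (diag_mx x) != 0.
  by rewrite det_diag; apply/prodf_neq0 => i _; rewrite mxE var_neq0.
rewrite !det_mulmx; apply: (mulf_neq0 (mulf_neq0 x_neq0 _) x_neq0); apply: det_skew4_neq0.
have -> : 1 * 1 - c%:R * c%:R + (c + 1)%:R * 1 = c.+1%:R * (2%:R - c%:R) :> Fld.
  by rewrite natrD; ring.
apply: mulf_neq0; apply/eqP; first by move/(natr_Fld_inj (n := 0)).
by move/eqP; rewrite subr_eq0 => /eqP /natr_Fld_inj /esym.
Qed.

Theorem proposition3p1 (c : nat) :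
  (* (i) Laurent property: x_n in Z[x0^{+-1},...,x3^{+-1}, beta] for all n in Z *)
  (forall n : int, exists (p : Pol) (a0 a1 a2 a3 : nat),
      xs c n * (var 0 ^+ a0 * var 1 ^+ a1 * var 2 ^+ a2 * var 3 ^+ a3)
      = toF p)
  /\
  (* (ii) singularity confinement: along any family of orbits (parametrised by eps)
     with x_n, x_{n+1}, x_{n+2} generic and fixed and x_{n+4} = eps,
     x_{n+8} stays bounded as eps -> 0 *)
  (forall (K : numFieldType) (bet : K) (n : int) (a b d : K) (delta0 : K)
          (x : K -> int -> K),
      bet != 0 -> b != 0 -> d != 0 -> 0 < delta0 ->
      (forall eps : K, 0 < `|eps| < delta0 ->
         [/\ x eps n = a, x eps (n + 1) = b, x eps (n + 2) = d,
             x eps (n + 4) = eps &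
             forall k : nat, (k <= 4)%N ->
               x eps (n + k%:Z + 4) * x eps (n + k%:Z)
               = x eps (n + k%:Z + 3) * x eps (n + k%:Z + 1)
                 + bet * x eps (n + k%:Z + 2) ^+ c]) ->
      exists (M delta : K), 0 < delta /\
        forall eps : K, 0 < `|eps| < delta -> `|x eps (n + 8)| <= M)
  /\
  (* (iii) phi is Poisson for the log-canonical bracket {.,.}_c ... *)
  (forall i j : 'I_4,
      bracket c (var i) (var j) = (omega c i j)%:~R * var i * var j)
  /\ poisson_map c
  (* ... which is nondegenerate for c <> 2 *)
  /\ (c <> 2%N -> nondegenerate_bracket c).
Proof.
split.
  move=> n; have [p [k E]] := laurent_xs c n.
  by exists p, k, k, k, k; rewrite -E /monomial_x !big_ord_recr big_ord0 /= mul1r !exprMn.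
split; first exact: singularity_confinement.
split; first by move=> i j; apply: bracket_var.
split; [exact: poisson_map_phi | exact: bracket_nondegenerate].
Qed.
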